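(* Assume the setting below (missing at random). Fix $\boldsymbol\delta\in\mathbb R^n$, let $\mathcal S=\{i:M_i=1\}$, $n_{\mathcal S1}=\sum_{i\in\mathcal S}Z_i$ and $n_{\mathcal S0}=|\mathcal S|-n_{\mathcal S1}$. For $\boldsymbol z\in\{0,1\}^n$, $\boldsymbol y\in\overline{\mathbb R}^n$ let $t_{\mathrm R,\phi,\mathcal S}(\boldsymbol z,\boldsymbol y)=t_{\mathrm R,\phi}(\boldsymbol z_{\mathcal S},\boldsymbol y_{\mathcal S})$, the statistic computed on the subvectors indexed by $\mathcal S$ (original index order kept), and let $G_{\mathrm R,\phi,\mathcal S}(c)=\mathbb P(t_{\mathrm R,\phi,\mathcal S}(\boldsymbol A,\boldsymbol y_0)\ge c)$, where $\boldsymbol A_{\mathcal S}$ is uniform over assignments of the units in $\mathcal S$ with exactly $n_{\mathcal S1}$ treated (with $\mathcal S,n_{\mathcal S1}$ held fixed) and $\boldsymbol y_0\in\mathbb R^n$ is any fixed vector. Then $$p_{\boldsymbol Z,\boldsymbol\delta,\mathcal S}=G_{\mathrm R,\phi,\mathcal S}\big(t_{\mathrm R,\phi,\mathcal S}(\boldsymbol Z,\boldsymbol Y-\boldsymbol\delta\circ\boldsymbol Z)\big)$$ (which only uses the observed outcomes $Y_i$, $i\in\mathcal S$) is a valid p-value for $H_{\boldsymbol\delta}:\boldsymbol\tau=\boldsymbol\delta$: if $H_{\boldsymbol\delta}$ holds, $\mathbb P(p_{\boldsymbol Z,\boldsymbol\delta,\mathcal S}\le\alpha)\le\alpha$ for every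 $\alpha\in(0,1)$.
   Context: There are $n$ units with fixed potential outcomes $Y_i^\star(0),Y_i^\star(1)\in\mathbb R$; $\tau_i=Y_i^\star(1)-Y_i^\star(0)$, $\boldsymbol\tau=(\tau_1,\dots,\tau_n)^\intercal$. Missing at random: the potential missingness pairs $(M_i(1),M_i(0))\in\{0,1\}^2$, $1\le i\le n$, are random, i.i.d. across $i$, with $\mathbb P((M_i(1),M_i(0))=(m,m'))=p_{mm'}$ for constants $p_{11},p_{10},p_{01},p_{00}\ge0$ summing to 1 that do not depend on the potential outcomes (conditionally on the potential outcomes). The assignment $\boldsymbol Z\in\{0,1\}^n$ is from a completely randomized experiment: for fixed positive integers $n_1,n_0$ with $n_1+n_0=n$, $\boldsymbol Z$ is uniform over vectors with exactly $n_1$ ones, independently of the potential outcomes and potential missingness indicators. Observed missingness $M_i=Z_iM_i(1)+(1-Z_i)M_i(0)$; the realized outcome $Z_iY_i^\star(1)+(1-Z_i)Y_i^\star(0)$ is observed, and denoted $Y_i$, only when $M_i=1$. $\circ$ is the entrywise product. $\overline{\mathbb R}=\mathbb R\cup\{\pm\infty\}$; $\psi_{i,j}(y,y')=\mathbf 1\{y>y'\}+\mathbf 1\{y=y'\}\mathbf 1\{i\ge j\}$; $\mathrm{rank}_i(\boldsymbol y)=\sum_j\psi_{i,j}(y_i,y_j)$. $\phi$ is a fixed nondecreasing real function on the nonnegative integers. $t_{\mathrm R,\phi}(\boldsymbol z,\boldsymbol y)$ is either $\sum_i z_i\phi(\mathrm{rank}_i(\boldsymbol y))$ or $\sum_i z_i\phi\big(\sum_j(1-z_j)\psi_{i,j}(y_i,y_j)\big)$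 (sums over the units of the given vectors); the result holds for either. *)

From HB Require Import structures.
From mathcomp Require Import all_boot all_order all_algebra.
From mathcomp Require Import reals.
Set Implicit Arguments. Unset Strict Implicit. Unset Printing Implicit Defensive.
Import Order.TTheory GRing.Theory Num.Theory.
Local Open Scope ring_scope.

Section Defs.
Variables (R : realType) (n : nat).

Definition assignment := {ffun 'I_n -> bool}.
(* Potential missingness pairs (M_i(1), M_i(0)) for each unit. *)
Definition misspairs := {ffun 'I_n -> bool * bool}.

Definition ntreated (z : assignment) : nat := #|[set i | z i]|.

Definition psi (i j : 'I_n) (y y' : R) : nat :=
  (nat_of_bool (y' < y)%R + nat_of_bool ((y == y') && (j <= i)%N))%N.

Inductive stat_kind := RankSum | ControlRank.

(* t_{R,phi,S}(z,y) = t_{R,phi}(z_S, y_S): the statistic computed on the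
   subvectors indexed by S, original index order kept (so the tie-break
   i >= j on positions in the subvector is the same as on original indices). *)
Definition tRS (k : stat_kind) (phi : nat -> R) (S : {set 'I_n})
    (z : assignment) (y : 'I_n -> R) : R :=
  \sum_(i in S | z i)
     phi (match k with
          | RankSum => \sum_(j in S) psi i j (y i) (y j)
          | ControlRank => \sum_(j in S) ((~~ z j : nat) * psi i j (y i) (y j))%N
          end).

(* Assignments of the units of S with exactly m treated
   (units outside S are set to 0, they are irrelevant for tRS). *)
Definition assignS (S : {set 'I_n}) (m : nat) : {set assignment} :=
  [set a : assignment | [forall i, a i ==> (i \in S)] && (ntreated a == m)].

Definition GRS (k : stat_kind) (phi : nat -> R) (S : {set 'I_n}) (m : nat)
    (y0 : 'I_n -> R) (c : R) : R :=
  (#|[set a in assignS S m | c <= tRS k phi S a y0]|)%:R / (#|assignS S m|)%:R.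

Definition obsS (z : assignment) (mm : misspairs) : {set 'I_n} :=
  [set i | if z i then (mm i).1 else (mm i).2].

Definition Yreal (Y1 Y0 : 'I_n -> R) (z : assignment) (i : 'I_n) : R :=
  if z i then Y1 i else Y0 i.

Definition pval (k : stat_kind) (phi : nat -> R) (Y1 Y0 delta y0 : 'I_n -> R)
    (z : assignment) (mm : misspairs) : R :=
  let S := obsS z mm in
  GRS k phi S #|[set i in S | z i]| y0
      (tRS k phi S z (fun i => Yreal Y1 Y0 z i - delta i * (z i)%:R)).

Definition pmiss (p11 p10 p01 p00 : R) (b : bool * bool) : R :=
  match b with
  | (true, true) => p11 | (true, false) => p10
  | (false, true) => p01 | (false, false) => p00
  end.

(* Joint law: Z uniform over assignments with n1 treated, independent of the
   i.i.d. missingness pairs with law pmiss. Probability of an event E. *)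
Definition Pr (n1 : nat) (p11 p10 p01 p00 : R)
    (E : assignment -> misspairs -> bool) : R :=
  \sum_(z : assignment | ntreated z == n1) \sum_(mm : misspairs)
     ((('C(n, n1))%:R)^-1 * \prod_(i < n) pmiss p11 p10 p01 p00 (mm i))
       * (E z mm)%:R.

End Defs.

(* Under H_delta every adjusted outcome Y_i - delta_i Z_i equals Y_i(0), so the p-value is
   G_S evaluated at the statistic of the realised assignment on the fixed outcomes Y(0).
   Condition on the observed set S and on the number m of treated units in S.  Given Z, the
   probability of observing S depends on Z only through the four counts of units by
   (treated, observed), and these are fixed by (S, m); moreover the restriction of Z to S is
   then uniform over the assignments of S with m treated units, since all fibres of the
   restriction map have the same size.  A rank statistic sees the outcomes only through the
   ranks, a bijection of S onto {1, ..., |S|}, so G_S does not depend on the reference vector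
   y0 and may be computed at Y(0).  What remains is the superuniformity of a randomization
   p-value under a uniform draw, P(G(t(A)) <= alpha) <= alpha, which survives averaging over
   (S, m). *)

From HB Require Import structures.
From mathcomp Require Import all_boot all_order all_algebra.
From mathcomp Require Import reals.
Import Order.TTheory GRing.Theory Num.Theory.
Local Open Scope ring_scope.

Set Implicit Arguments. Unset Strict Implicit. Unset Printing Implicit Defensive.

Lemma sum_nat_card (T : finType) (A : {pred T}) (b : pred T) :
  (\sum_(j in A) b j = #|[set j in A | b j]|)%N.
Proof.
rewrite -sum1_card big_mkcond [RHS]big_mkcond; apply: eq_bigr => j _.
by rewrite inE; case: (j \in A); case: (b j).
Qed.

Lemma card_setIdC (T : finType) (A : {set T}) (P : pred T) :
  #|[set i in A | ~~ P i]| = (#|A| - #|[set i in A | P i]|)%N.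
Proof.
rewrite -(cardsID [set i | P i] A) -setIdE addKn.
by apply: eq_card => i; rewrite !inE andbC.
Qed.

Lemma prod_bool_pow (R : comPzSemiRingType) (T : finType) (A : {pred T}) (f : bool -> R)
    (b : pred T) :
  \prod_(i in A) f (b i) = f true ^+ #|[set i in A | b i]| * f false ^+ #|[set i in A | ~~ b i]|.
Proof.
rewrite (bigID b) /= -!prodr_const.
by congr (_ * _); apply: eq_big => i; rewrite ?inE // => /andP[_]; [move=> -> | move/negPf ->].
Qed.

Lemma card_setId_imset (T T' : finType) (f : T -> T') (A : {set T}) (P : pred T') :
  {in A &, injective f} -> #|[set a in A | P (f a)]| = #|[set x in f @: A | P x]|.
Proof.
move=> f_inj; rewrite -(card_in_imset (f := f)); last first.
  by move=> a b /setIdP[Aa _] /setIdP[Ab _]; apply: f_inj.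
apply: eq_card => x; rewrite inE; apply/imsetP/andP.
  by case=> a /setIdP[Aa Pa] ->; rewrite imset_f.
by case=> /imsetP[a Aa ->] Pa; exists a; rewrite ?inE ?Aa.
Qed.

Lemma card_equal_fibres (T T' : finType) (f : T -> T') (Z : {set T}) (A : {set T'}) :
    {in Z, forall z, f z \in A} ->
    {in A &, forall a a', #|[set z in Z | f z == a]| = #|[set z in Z | f z == a']|} ->
  exists K, forall Q : pred T', #|[set z in Z | Q (f z)]| = (K * #|[set a in A | Q a]|)%N.
Proof.
move=> fZA eq_fibres; have [A0 | [a0 Aa0]] := set_0Vmem A.
  exists 0%N => Q; apply/eqP; rewrite mul0n cards_eq0; apply/eqP/setP => z.
  by rewrite !inE; apply/negbTE/andP => -[/fZA]; rewrite A0 inE.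
exists #|[set z in Z | f z == a0]| => Q.
rewrite -sum1_card (partition_big f (mem A)) => [|z /setIdP[/fZA //]].
rewrite -[#|[set a in A | Q a]|]sum_nat_card big_distrr; apply: eq_bigr => a Aa /=.
rewrite sum1_card (eq_fibres a0 a) //; case: (boolP (Q a)) => [Qa | nQa] /=.
  rewrite muln1; apply: eq_card => z; rewrite unfold_in /= !inE.
  by case: (f z =P a) => [-> | _]; rewrite ?Qa ?andbT ?andbF.
rewrite muln0; apply: eq_card0 => z; rewrite unfold_in /= !inE.
by case: (f z =P a) => [-> | _]; rewrite ?(negbTE nQa) ?andbF.
Qed.

Lemma card_pvalue_le (R : realFieldType) (T : finType) (A : {set T}) (t : T -> R) (al : R) :
  0 <= al ->
  #|[set a in A | #|[set b in A | t a <= t b]|%:R / #|A|%:R <= al]|%:R <= al * #|A|%:R.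
Proof.
move=> al_ge0; set B := [set a in A | _].
have [->|/set0Pn[b0 Bb0]] := eqVneq B set0; first by rewrite cards0 mulr_ge0.
(* For a minimising t on the rejection set B, B lies in {b | t a <= t b}, and this set is
   small because a itself is rejected. *)
have [a Ba a_min] := arg_minP t Bb0.
have {}Ba : a \in B := Ba.
move: (Ba); rewrite inE => /andP[Aa a_pval].
have A_gt0 : (0 < #|A|)%N by rewrite card_gt0; apply/set0Pn; exists a.
have sub_B : B \subset [set b in A | t a <= t b].
  apply/subsetP => b Bb; rewrite inE (a_min b Bb) andbT.
  by move: Bb; rewrite inE => /andP[].
rewrite (le_trans _ (_ : #|[set b in A | t a <= t b]|%:R <= _)) //.
  by rewrite ler_nat subset_leq_card.
by rewrite -ler_pdivrMr ?ltr0n.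
Qed.

Lemma tRS_eq (R : realType) n k (phi : nat -> R) (S : {set 'I_n}) z (y y' : 'I_n -> R) :
  y =1 y' -> tRS k phi S z y = tRS k phi S z y'.
Proof.
by move=> eq_y; apply: eq_bigr => i _; congr phi; case: k; apply: eq_bigr => j _; rewrite !eq_y.
Qed.

Section Ranks.
Variables (R : realType) (n : nat) (S : {set 'I_n}).

Section FixedOutcomes.
Variable y : 'I_n -> R.

Definition key (i : 'I_n) : R *l nat := (y i, val i).

Lemma psi_key i j : psi i j (y i) (y j) = (key j <= key i)%O :> nat.
Proof. by rewrite /psi /key lexi_pair; case: ltgtP. Qed.

Lemma key_inj : injective key.
Proof. by move=> i j [_ /val_inj]. Qed.

Definition rank (i : 'I_n) : nat := #|[set j in S | (key j <= key i)%O]|.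

Lemma sum_psi i : (\sum_(j in S) psi i j (y i) (y j))%N = rank i.
Proof. by under eq_bigr do rewrite psi_key; apply: sum_nat_card. Qed.

Lemma rank_le i j : i \in S -> j \in S -> (rank j <= rank i)%N = (key j <= key i)%O.
Proof.
move=> Si Sj; have [le_ji|lt_ij] := leP (key j) (key i).
  apply: subset_leq_card; apply/subsetP => l; rewrite !inE => /andP[-> /le_trans]; exact.
apply/negbTE; rewrite -ltnNge; apply: proper_card; apply/properP; split.
  apply/subsetP => l; rewrite !inE => /andP[-> /le_trans le_lj]; exact/le_lj/ltW.
by exists j; rewrite !inE Sj ?lexx // leNgt lt_ij.
Qed.

Lemma rank_inj : {in S &, injective rank}.
Proof.
move=> i j Si Sj eq_ij; apply: key_inj; apply/eqP; rewrite eq_le.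
by rewrite -(rank_le Si Sj) -(rank_le Sj Si) eq_ij leqnn.
Qed.

Lemma rank_gt0 i : i \in S -> (0 < rank i)%N.
Proof. by move=> Si; rewrite card_gt0; apply/set0Pn; exists i; rewrite inE Si lexx. Qed.

Lemma rank_le_card i : (rank i <= #|S|)%N.
Proof. by apply: subset_leq_card; apply/subsetP => j; rewrite inE => /andP[]. Qed.

Definition ord_rank (i : 'I_n) : 'I_#|S|.+1 := inord (rank i).

Lemma ord_rankE i : ord_rank i = rank i :> nat.
Proof. by rewrite inordK // ltnS rank_le_card. Qed.

Lemma ord_rank_inj : {in S &, injective ord_rank}.
Proof. by move=> i j Si Sj /(congr1 val); rewrite /= !ord_rankE; apply: rank_inj. Qed.

Lemma ord_rank_onto : ord_rank @: S = [set~ ord0].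
Proof.
apply/eqP; rewrite eqEcard cardsC1 card_ord card_in_imset; last exact: ord_rank_inj.
rewrite leqnn andbT; apply/subsetP => _ /imsetP[i Si ->].
by rewrite !inE -val_eqE /= ord_rankE -lt0n rank_gt0.
Qed.

Definition rank_set (a : assignment n) : {set 'I_#|S|.+1} := ord_rank @: [set i in S | a i].

Lemma mem_rank_set a i : i \in S -> (ord_rank i \in rank_set a) = a i.
Proof.
move=> Si; apply/imsetP/idP => [[j] | ai]; last by exists i; rewrite // inE Si.
by rewrite inE => /andP[Sj aj] /(ord_rank_inj Si Sj) ->.
Qed.

Lemma card_rank_set a : #|rank_set a| = #|[set i in S | a i]|.
Proof. by rewrite card_in_imset // => i j /setIdP[Si _] /setIdP[Sj _]; apply: ord_rank_inj. Qed.

Definition rank_stat (k : stat_kind) (phi : nat -> R) (X : {set 'I_#|S|.+1}) : R :=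
  \sum_(x in X) phi (match k with
    | RankSum => val x
    | ControlRank => #|[set x' | (x' \notin X) && (0 < x' <= x)%N]|
    end).

Lemma tRS_rank_set k phi a : tRS k phi S a y = rank_stat k phi (rank_set a).
Proof.
rewrite /rank_stat /rank_set big_imset /=; last first.
  by move=> i j /setIdP[Si _] /setIdP[Sj _]; apply: ord_rank_inj.
apply: eq_big => [i | i /andP[Si ai]]; first by rewrite inE.
congr phi; case: k; first by rewrite sum_psi ord_rankE.
rewrite (_ : (\sum_(j in S) _)%N = #|[set j in S | ~~ a j && (rank j <= rank i)%N]|).
  rewrite -(card_in_imset (f := ord_rank)); last first.
    by move=> j l /setIdP[Sj _] /setIdP[Sl _]; apply: ord_rank_inj.
  apply: eq_card => x; rewrite inE; apply/imsetP/idP.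
    case=> j /setIdP[Sj /andP[aj le_ji]] ->.
    by rewrite mem_rank_set // aj !ord_rankE rank_gt0.
  case/andP=> nXx /andP[x_gt0 le_xi].
  have : x \in ord_rank @: S by rewrite ord_rank_onto !inE -val_eqE -lt0n.
  case/imsetP=> j Sj def_x; exists j => //; move: nXx le_xi.
  by rewrite def_x inE Sj mem_rank_set // !ord_rankE => ->.
rewrite -sum_nat_card; apply: eq_bigr => j Sj.
by rewrite psi_key -(rank_le Si Sj) mulnb.
Qed.

End FixedOutcomes.

Lemma assignS_sub m a i : a \in assignS S m -> a i -> i \in S.
Proof. by rewrite inE => /andP[/forallP/(_ i)/implyP]. Qed.

Lemma assignS_card m a : a \in assignS S m -> #|[set i in S | a i]| = m.
Proof.
move=> /[dup] Aa; rewrite inE => /andP[_ /eqP <-]; apply: eq_card => i.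
by rewrite !inE andb_idl // => /(assignS_sub Aa).
Qed.

Definition rank_sets m := [set X : {set 'I_#|S|.+1} | (X \subset [set~ ord0]) && (#|X| == m)].

Lemma rank_set_inj y m : {in assignS S m &, injective (rank_set y)}.
Proof.
move=> a a' Aa Aa' eq_aa'; apply/ffunP => i.
have [Si | nSi] := boolP (i \in S); first by rewrite -!(mem_rank_set y) // eq_aa'.
by apply/idP/idP => ai; [move/(assignS_sub Aa): ai | move/(assignS_sub Aa'): ai];
  rewrite (negbTE nSi).
Qed.

Lemma rank_set_onto y m : rank_set y @: assignS S m = rank_sets m.
Proof.
apply/setP => X; apply/imsetP/idP => [[a Aa ->] | ].
  rewrite inE card_rank_set (assignS_card Aa) eqxx andbT -(ord_rank_onto y).
  by apply: imsetS; apply/subsetP => i /setIdP[].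
rewrite inE => /andP[sXS /eqP <-].
pose a : assignment n := [ffun i => (i \in S) && (ord_rank y i \in X)].
have aX : rank_set y a = X.
  apply/setP => x; apply/imsetP/idP => [[i] | Xx].
    by rewrite inE ffunE => /andP[_ /andP[_ Xi] ->].
  move: (subsetP sXS x Xx); rewrite -(ord_rank_onto y) => /imsetP[i Si def_x].
  by exists i; rewrite // inE ffunE Si -def_x Xx.
exists a => //; rewrite inE -aX card_rank_set; apply/andP; split.
  by apply/forallP => i; rewrite ffunE; apply/implyP => /andP[].
by apply/eqP; apply: eq_card => i; rewrite !inE ffunE; case: (i \in S).
Qed.

Lemma GRS_indep k (phi : nat -> R) m (y y' : 'I_n -> R) c : GRS k phi S m y c = GRS k phi S m y' c.
Proof.
suff count_indep y1 : #|[set a in assignS S m | c <= tRS k phi S a y1]| =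
    #|[set X in rank_sets m | c <= rank_stat k phi X]| by rewrite /GRS !count_indep.
rewrite -(rank_set_onto y1) -(card_setId_imset _ (rank_set_inj (y := y1) (m := m))).
by apply: eq_card => a; rewrite !inE tRS_rank_set.
Qed.

End Ranks.

Section Strata.
Variables (n : nat) (S : {set 'I_n}) (n1 : nat).

Definition restrict (z : assignment n) : assignment n := [ffun i => z i && (i \in S)].

Definition patch (a z : assignment n) : assignment n := [ffun i => if i \in S then a i else z i].

Definition stratum (m : nat) : {set assignment n} :=
  [set z | (ntreated z == n1) && (#|[set i in S | z i]| == m)].

Lemma tRS_restrict (R : realType) k (phi : nat -> R) z y :
  tRS k phi S (restrict z) y = tRS k phi S z y.
Proof.
rewrite /tRS; apply: eq_big => [i | i /andP[Si _]].
  by rewrite ffunE; case: (i \in S); rewrite ?andbT ?andbF.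
by case: k => //; congr phi; apply: eq_bigr => j Sj; rewrite ffunE Sj andbT.
Qed.

Lemma ntreated_split z :
  ntreated z = (#|[set i in S | z i]| + #|[set i in ~: S | z i]|)%N.
Proof.
rewrite /ntreated -(cardsID S [set i | z i]).
by congr (_ + _)%N; apply: eq_card => i; rewrite !inE andbC.
Qed.

Lemma restrict_stratum m z : z \in stratum m -> restrict z \in assignS S m.
Proof.
rewrite !inE => /andP[_ /eqP <-]; apply/andP; split.
  by apply/forallP => i; rewrite ffunE; apply/implyP => /andP[].
by apply/eqP; apply: eq_card => i; rewrite !inE ffunE andbC.
Qed.

Lemma restrict_patch m a z : a \in assignS S m -> restrict (patch a z) = a.
Proof.
move=> Aa; apply/ffunP => i; rewrite !ffunE.
case: (boolP (i \in S)) => [_ | nSi]; rewrite ?andbT ?andbF //.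
by apply/esym/negP => /(assignS_sub Aa); apply/negP.
Qed.

Lemma patch_stratum m a z : a \in assignS S m -> z \in stratum m -> patch a z \in stratum m.
Proof.
move=> Aa; rewrite !inE => /andP[/eqP <- /eqP z_m].
have patch_S : #|[set i in S | patch a z i]| = m.
  by rewrite -(assignS_card Aa); apply: eq_card => i; rewrite !inE ffunE; case: (i \in S).
rewrite patch_S eqxx andbT !ntreated_split patch_S z_m; apply/eqP; congr addn.
by apply: eq_card => i; rewrite !inE ffunE; case: (i \in S).
Qed.

Lemma card_stratum_restrict m : exists K, forall Q : pred (assignment n),
  #|[set z in stratum m | Q (restrict z)]| = (K * #|[set a in assignS S m | Q a]|)%N.
Proof.
apply: card_equal_fibres => [z | a a' Aa Aa']; first exact: restrict_stratum.
suff fibre_le b b' : b \in assignS S m -> b' \in assignS S m ->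
    (#|[set z in stratum m | restrict z == b]| <= #|[set z in stratum m | restrict z == b']|)%N.
  by apply/eqP; rewrite eqn_leq !fibre_le.
move=> Ab Ab'; rewrite -(card_in_imset (f := patch b')); last first.
  move=> z z' /setIdP[_ /eqP zb] /setIdP[_ /eqP z'b] /ffunP eq_zz'; apply/ffunP => i.
  have := eq_zz' i; rewrite !ffunE; case: ifP => // Si _.
  by have := congr1 (fun w : assignment n => w i) (etrans zb (esym z'b)); rewrite !ffunE Si !andbT.
apply: subset_leq_card; apply/subsetP => _ /imsetP[z /setIdP[Zz _] ->].
by rewrite inE patch_stratum //= (restrict_patch _ Ab').
Qed.

End Strata.

Lemma card_stratum_pvalue_le (R : realType) n (S : {set 'I_n}) n1 m k (phi : nat -> R)
    (y0 y : 'I_n -> R) (al : R) : 0 <= al ->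
  #|[set z in stratum S n1 m | GRS k phi S m y0 (tRS k phi S z y) <= al]|%:R
    <= al * #|stratum S n1 m|%:R.
Proof.
move=> al_ge0; have [K card_restrict] := card_stratum_restrict S n1 m.
have card_predT (T : finType) (A : {set T}) : #|A| = #|[set x in A | predT x]|.
  by apply: eq_card => x; rewrite inE andbT.
pose t a := tRS k phi S a y.
have -> : #|[set z in stratum S n1 m | GRS k phi S m y0 (tRS k phi S z y) <= al]| =
    #|[set z in stratum S n1 m | (fun a => GRS k phi S m y (t a) <= al) (restrict S z)]|.
  by apply: eq_card => z; rewrite !inE /t tRS_restrict (GRS_indep _ _ _ _ y0 y).
rewrite (card_restrict (fun a => GRS k phi S m y (t a) <= al)).
rewrite [#|stratum _ _ _|]card_predT (card_restrict predT) -card_predT.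
rewrite !natrM mulrCA ler_wpM2l //.
exact: card_pvalue_le.
Qed.

Lemma card_ntreated n n1 : #|[set z : assignment n | ntreated z == n1]| = 'C(n, n1).
Proof.
pose treated (z : assignment n) := [set i | z i].
have treated_inj : injective treated.
  by move=> z z' /setP eq_z; apply/ffunP => i; have := eq_z i; rewrite !inE.
have treated_ffun (A : {set 'I_n}) : treated [ffun i => i \in A] = A.
  by apply/setP => i; rewrite inE ffunE.
rewrite -[n in 'C(n, _)]card_ord -card_draws -(card_imset _ treated_inj).
apply: eq_card => A; rewrite inE; apply/imsetP/idP => [[z] | A_n1].
  by rewrite inE => nt_z ->.
by exists [ffun i => i \in A]; rewrite ?inE /ntreated -/(treated _) treated_ffun.
Qed.

Lemma sum_by_stratum (R : realType) n (S : {set 'I_n}) n1 (F : assignment n -> R) :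
  \sum_(z | ntreated z == n1) F z = \sum_(m < n.+1) \sum_(z in stratum S n1 m) F z.
Proof.
rewrite (partition_big (fun z : assignment n => inord #|[set i in S | z i]| : 'I_n.+1) predT) //.
apply: eq_bigr => m _; apply: eq_bigl => z; rewrite inE; congr andb.
have lt_Sz : (#|[set i in S | z i]| < n.+1)%N.
  by rewrite ltnS -[X in (_ <= X)%N](card_ord n) max_card.
by rewrite -val_eqE /= inordK.
Qed.

Section Missingness.
Variables (R : realType) (n : nat) (p11 p10 p01 p00 : R).

Definition obs_prob (z : assignment n) (S : {set 'I_n}) : R :=
  \sum_(mm : misspairs n) (\prod_(i < n) pmiss p11 p10 p01 p00 (mm i)) * (obsS z mm == S)%:R.

Definition unit_obs_prob (b s : bool) : R :=
  \sum_(x : bool * bool) pmiss p11 p10 p01 p00 x * ((if b then x.1 else x.2) == s)%:R.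

Lemma obs_probE z S : obs_prob z S = \prod_(i < n) unit_obs_prob (z i) (i \in S).
Proof.
rewrite bigA_distr_bigA; apply: eq_bigr => mm _; rewrite big_split /=; congr (_ * _).
have [<- | neq] := eqVneq (obsS z mm) S; first by rewrite big1 // => i _; rewrite inE eqxx.
have [i] : exists i, (i \in obsS z mm) != (i \in S).
  by apply/existsP; apply: contraR neq => /existsPn eq_i; apply/eqP/setP => i; apply/eqP/negPn/eq_i.
by rewrite inE => /negbTE obs_i; rewrite (bigD1 i) //= obs_i mul0r.
Qed.

Definition stratum_obs_prob (S : {set 'I_n}) (n1 m : nat) : R :=
  unit_obs_prob true true ^+ m * unit_obs_prob false true ^+ (#|S| - m)
    * (unit_obs_prob true false ^+ (n1 - m) * unit_obs_prob false false ^+ (#|~: S| - (n1 - m))).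

Lemma stratum_obs_probE S n1 m z : z \in stratum S n1 m -> obs_prob z S = stratum_obs_prob S n1 m.
Proof.
rewrite inE => /andP[/eqP nt_z /eqP z_m].
have z_out : #|[set i in ~: S | z i]| = (n1 - m)%N by rewrite -nt_z (ntreated_split S) z_m addKn.
rewrite obs_probE (bigID (mem S)) /=.
rewrite [\prod_(i in S) _](eq_bigr (fun i => unit_obs_prob (z i) true)) => [|i ->] //.
rewrite [\prod_(i | ~~ _) _](eq_bigr (fun i => unit_obs_prob (z i) false)) => [|i /negPf ->] //.
rewrite [\prod_(i | ~~ _) _](eq_bigl (fun i => i \in ~: S)) => [|i]; last by rewrite /= in_setC.
rewrite (prod_bool_pow S (fun u => unit_obs_prob u true) z).
rewrite (prod_bool_pow (~: S) (fun u => unit_obs_prob u false) z).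
by rewrite !card_setIdC z_m z_out.
Qed.

Hypotheses (p11_ge0 : 0 <= p11) (p10_ge0 : 0 <= p10) (p01_ge0 : 0 <= p01) (p00_ge0 : 0 <= p00).

Lemma stratum_obs_prob_ge0 S n1 m : 0 <= stratum_obs_prob S n1 m.
Proof.
have unit_ge0 b s : 0 <= unit_obs_prob b s.
  by apply: sumr_ge0 => -[[] []] _; rewrite mulr_ge0 ?ler0n.
by rewrite !mulr_ge0 ?exprn_ge0.
Qed.

Hypothesis p_sum1 : p11 + p10 + p01 + p00 = 1.

Lemma sum_obs_prob z : \sum_(S : {set 'I_n}) obs_prob z S = 1.
Proof.
have obs_once mm : \sum_(S : {set 'I_n}) (obsS z mm == S)%:R = 1 :> R.
  by rewrite (bigD1 (obsS z mm)) //= eqxx big1 ?addr0 // => S; rewrite eq_sym => /negPf ->.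
rewrite exchange_big /=; under eq_bigr do rewrite -mulr_sumr obs_once mulr1.
transitivity (\prod_(i < n) \sum_(x : bool * bool) pmiss p11 p10 p01 p00 x).
  by rewrite bigA_distr_bigA.
rewrite big1 // => i _.
rewrite (eq_bigr (fun x => pmiss p11 p10 p01 p00 (x.1, x.2))) => [|[] //].
by rewrite -(pair_bigA _ (fun a b => pmiss p11 p10 p01 p00 (a, b))) /= !big_bool /= addrA.
Qed.

End Missingness.

Lemma sum_obs_prob_pvalue_le (R : realType) n (p11 p10 p01 p00 : R) n1 (S : {set 'I_n}) k
    (phi : nat -> R) (y0 y : 'I_n -> R) (al : R) :
  0 <= p11 -> 0 <= p10 -> 0 <= p01 -> 0 <= p00 -> 0 <= al ->
  \sum_(z | ntreated z == n1) obs_prob p11 p10 p01 p00 z S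
      * (GRS k phi S #|[set i in S | z i]| y0 (tRS k phi S z y) <= al)%R%:R
    <= al * \sum_(z | ntreated z == n1) obs_prob p11 p10 p01 p00 z S.
Proof.
move=> p11_ge0 p10_ge0 p01_ge0 p00_ge0 al_ge0.
rewrite !(sum_by_stratum S) mulr_sumr; apply: ler_sum => m _.
set c := stratum_obs_prob p11 p10 p01 p00 S n1 m.
rewrite (eq_bigr (fun z => c * (GRS k phi S m y0 (tRS k phi S z y) <= al)%R%:R)) => [|z Zz];
  last first.
  by move: (Zz); rewrite (stratum_obs_probE _ _ _ _ Zz) inE => /andP[_ /eqP ->].
rewrite [X in _ <= _ * X](eq_bigr (fun=> c)) => [|z]; last exact: stratum_obs_probE.
rewrite -mulr_sumr -natr_sum sum_nat_card sumr_const -[c *+ _]mulr_natr mulrCA.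
by rewrite ler_wpM2l ?stratum_obs_prob_ge0 ?card_stratum_pvalue_le.
Qed.

Lemma pval_null (R : realType) n k (phi : nat -> R) (Y1 Y0 delta y0 : 'I_n -> R) z mm :
    (forall i, Y1 i - Y0 i = delta i) ->
  pval k phi Y1 Y0 delta y0 z mm
    = GRS k phi (obsS z mm) #|[set i in obsS z mm | z i]| y0 (tRS k phi (obsS z mm) z Y0).
Proof.
move=> tau_delta; congr GRS; apply: tRS_eq => i.
by rewrite /Yreal -tau_delta; case: (z i); rewrite ?mulr1 ?mulr0 ?subr0 // subKr.
Qed.

Lemma Pr_obsS (R : realType) n n1 (p11 p10 p01 p00 : R)
    (E : assignment n -> misspairs n -> bool) (F : assignment n -> {set 'I_n} -> bool) :
    (forall z mm, E z mm = F z (obsS z mm)) ->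
  Pr n1 p11 p10 p01 p00 E = 'C(n, n1)%:R^-1 *
    \sum_(z | ntreated z == n1) \sum_(S : {set 'I_n}) obs_prob p11 p10 p01 p00 z S * (F z S)%:R.
Proof.
move=> EF; rewrite mulr_sumr; apply: eq_bigr => z _.
under eq_bigr do rewrite -mulrA EF; rewrite -mulr_sumr; congr (_ * _).
under [RHS]eq_bigr do rewrite mulr_suml; rewrite exchange_big /=; apply: eq_bigr => mm _.
rewrite (bigD1 (obsS z mm)) //= eqxx mulr1 [\sum_(i | _) _]big1 ?addr0 // => S.
by rewrite eq_sym => /negPf ->; rewrite mulr0 mul0r.
Qed.

Theorem theorem5 (R : realType) (n n1 n0 : nat)
  (Y1 Y0 : 'I_n -> R) (p11 p10 p01 p00 : R)
  (k : stat_kind) (phi : nat -> R) (delta y0 : 'I_n -> R) :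
  (0 < n1)%N -> (0 < n0)%N -> (n1 + n0)%N = n ->
  0 <= p11 -> 0 <= p10 -> 0 <= p01 -> 0 <= p00 ->
  p11 + p10 + p01 + p00 = 1 ->
  {homo phi : a b / (a <= b)%N >-> a <= b} ->
  (* H_delta : tau = delta *)
  (forall i, Y1 i - Y0 i = delta i) ->
  forall alpha : R, 0 < alpha -> alpha < 1 ->
  Pr n1 p11 p10 p01 p00
     (fun z mm => pval k phi Y1 Y0 delta y0 z mm <= alpha) <= alpha.
Proof.
move=> _ _ n_split p11_ge0 p10_ge0 p01_ge0 p00_ge0 p_sum1 _ tau_delta al al_gt0 _.
pose F (z : assignment n) (S : {set 'I_n}) :=
  GRS k phi S #|[set i in S | z i]| y0 (tRS k phi S z Y0) <= al.
rewrite (Pr_obsS _ _ _ _ _ (F := F)) => [|z mm]; last by rewrite pval_null.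
rewrite exchange_big /=.
apply: le_trans (_ : 'C(n, n1)%:R^-1 * \sum_(S : {set 'I_n}) al *
    \sum_(z | ntreated z == n1) obs_prob p11 p10 p01 p00 z S <= _).
  rewrite ler_wpM2l ?invr_ge0 // ler_sum // => S _.
  by apply: sum_obs_prob_pvalue_le; rewrite // ltW.
rewrite -mulr_sumr exchange_big /=; under eq_bigr do rewrite sum_obs_prob //.
have C_neq0 : 'C(n, n1)%:R != 0 :> R by rewrite pnatr_eq0 -lt0n bin_gt0 -n_split leq_addr.
rewrite sumr_const (eq_card (B := [set z | ntreated z == n1])) => [|z]; last by rewrite inE.
by rewrite card_ntreated mulrCA mulVf ?mulr1.
Qed.
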